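(* There is an absolute constant $C$ such that for every coverage function $f\colon\mathbb F_2^n\to[0,1]$ and every $\epsilon\in(0,1]$, $R^{lin}_{\epsilon\text{-approx}}(f)\le C/\epsilon$.
   Context: $f\colon 2^{[n]}\to\mathbb R$ (identified with a function on $\mathbb F_2^n$ via $x\leftrightarrow\{i:x_i=1\}$) is a coverage function if there is a finite universe $U=\{1,\dots,m\}$, subsets $A_1,\dots,A_n\subseteq U$ and non-negative weights $w_1,\dots,w_m$ with $f(S)=\sum_{u\in\bigcup_{j\in S}A_j}w_u$. For $S\subseteq[n]$, $\chi_S(x)=\sum_{i\in S}x_i\pmod2$. Approximate randomized $\mathbb F_2$-sketch complexity: $R^{lin}_{\epsilon\text{-approx}}(f)$ is the smallest integer $k$ such that there exist a probability distribution over $k$-tuples of subsets $\mathbf S_1,\dots,\mathbf S_k\subseteq[n]$ and $g\colon\mathbb F_2^k\to\mathbb R$ with $\mathbb E_{\mathbf S_1,\dots,\mathbf S_k}[(g(\chi_{\mathbf S_1}(x),\dots,\chi_{\mathbf S_k}(x))-f(x))^2]\le\epsilon$ for every $x\in\mathbb F_2^n$. *)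

From HB Require Import structures.
From mathcomp Require Import all_boot all_order all_algebra.
Set Implicit Arguments. Unset Strict Implicit. Unset Printing Implicit Defensive.
Import Order.TTheory GRing.Theory Num.Theory.
Local Open Scope ring_scope.

(* Points of F_2^n are identified with subsets of [n] = 'I_n: x <-> {i | x_i = 1}. *)

Definition coverage (R : numDomainType) (n : nat) (f : {set 'I_n} -> R) : Prop :=
  exists (m : nat) (A : 'I_n -> {set 'I_m}) (w : 'I_m -> R),
    (forall u, 0 <= w u) /\
    forall S : {set 'I_n}, f S = \sum_(u in \bigcup_(j in S) A j) w u.

(* chi_S(x) = sum_{i in S} x_i mod 2 *)
Definition chi (n : nat) (S x : {set 'I_n}) : bool := odd #|S :&: x|.

Definition sketch_approx (R : numDomainType) (n : nat) (f : {set 'I_n} -> R)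
    (eps : R) (k : nat) : Prop :=
  exists (mu : {ffun 'I_k -> {set 'I_n}} -> R) (g : {ffun 'I_k -> bool} -> R),
    (forall t, 0 <= mu t) /\ (\sum_t mu t = 1) /\
    forall x : {set 'I_n},
      \sum_t mu t * (g [ffun i => chi (t i) x] - f x) ^+ 2 <= eps.

(* R^lin_{eps-approx}(f) <= b  (the least such k is <= b iff some such k is <= b) *)
Definition Rlin_le (R : numDomainType) (n : nat) (f : {set 'I_n} -> R)
    (eps b : R) : Prop :=
  exists k : nat, k%:R <= b /\ sketch_approx f eps k.

From HB Require Import structures.
From mathcomp Require Import all_boot all_order all_algebra.
From mathcomp Require Import ring lra.
Set Implicit Arguments. Unset Strict Implicit. Unset Printing Implicit Defensive.
Import Order.TTheory GRing.Theory Num.Theory.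

(* Write f(S) = sum_u w_u [B_u meets S] with total weight W = f([n]) <= 1.
   Draw u with probability w_u / W and then a uniformly random subset S of B_u.
   If B_u meets x, exactly half of the subsets of B_u have odd intersection
   with x, so 2W chi_S(x) is an unbiased estimator of f(x); it takes only the
   values 0 and c = 2W <= 2, hence has variance c f(x) - f(x)^2 <= 2.  The mean
   of k independent copies is a function of k parities with error 2/k.
   Taking the least k with 2/k <= eps gives k <= 3/eps; since the scalars need
   not be archimedean, such a k is only guaranteed when n > 3/eps, and when
   n <= 3/eps the n coordinate parities x_i determine f exactly. *)

Section OddSubsets.
Variables (n : nat) (B x : {set 'I_n}).

Definition odd_subsets : {set {set 'I_n}} := powerset B :&: [set S | chi S x].

(* If B meets x, toggling a fixed j in B :&: x is an involution of powerset B
   that flips chi _ x, so exactly half of the subsets of B are odd. *)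
Lemma odd_subsets_half : B :&: x != set0 -> (#|odd_subsets|).*2 = 2 ^ #|B|.
Proof.
case/set0Pn=> j; rewrite inE => /andP [jB jx].
pose toggle (S : {set 'I_n}) := if j \in S then S :\ j else j |: S.
have toggleK : involutive toggle.
  move=> S; rewrite /toggle; case jS: (j \in S); first by rewrite setD11 setD1K.
  by rewrite setU11 setU1K ?jS.
have chi_toggle S : chi (toggle S) x = ~~ chi S x.
  rewrite /chi /toggle; case: ifP => jS.
    by rewrite setIDAC [#|S :&: x|](cardsD1 j) !inE jS jx /= negbK.
  by rewrite setIUl (setIidPl _) ?sub1set // cardsU1 inE jS.
have sub_toggle S : (toggle S \subset B) = (S \subset B).
  rewrite /toggle; case: ifP => jS; last by rewrite subUset sub1set jB.
  apply/idP/idP => [|/(subset_trans (subD1set S j))] // SB.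
  by rewrite -(setD1K jS) subUset sub1set jB.
have toggle_odd : toggle @: odd_subsets = powerset B :\: [set S | chi S x].
  apply/setP => S; apply/imsetP/idP => [[T]|].
    by rewrite !inE => /andP [TB To] ->; rewrite sub_toggle TB chi_toggle To.
  rewrite !inE => /andP [So SB]; exists (toggle S); last by rewrite toggleK.
  by rewrite !inE sub_toggle SB chi_toggle So.
rewrite -card_powerset -[in RHS](cardsID [set S | chi S x]) -toggle_odd.
by rewrite card_imset ?addnn //; apply: inv_inj.
Qed.

Lemma odd_subsets_disjoint : B :&: x = set0 -> odd_subsets = set0.
Proof.
move=> Bx; apply/setP => S; rewrite !inE /chi; apply/negP => /andP [SB].
have : S :&: x \subset B :&: x by rewrite setSI.
by rewrite Bx subset0 => /eqP ->; rewrite cards0.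
Qed.

End OddSubsets.

Local Open Scope ring_scope.

Definition expect (R : comPzRingType) (T : finType) (P : T -> R) (h : T -> R) : R :=
  \sum_t P t * h t.

Lemma expect_mixture (R : comPzRingType) (I T : finType) (q : I -> R)
    (D : I -> T -> R) (h : T -> R) :
  expect (fun t => \sum_u q u * D u t) h = \sum_u q u * expect (D u) h.
Proof.
rewrite /expect; under eq_bigr => t _ do rewrite mulr_suml.
rewrite exchange_big; apply: eq_bigr => u _; rewrite mulr_sumr.
by apply: eq_bigr => t _; rewrite mulrA.
Qed.

Lemma sum_indicator (R : pzSemiRingType) (T : finType) (A : {set T}) :
  \sum_(t : T) ((t \in A)%:R : R) = #|A|%:R.
Proof.
by rewrite -sum1_card natr_sum [RHS]big_mkcond; apply: eq_bigr => t _; case: (t \in A).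
Qed.

Section UniformSubset.
Variables (R : numFieldType) (n : nat) (B : {set 'I_n}).

Definition unif_subset (S : {set 'I_n}) : R := (S \subset B)%:R / (2 ^ #|B|)%:R.

Let pow2_neq0 : ((2 ^ #|B|)%:R : R) != 0.
Proof. by rewrite pnatr_eq0 expn_eq0. Qed.

Lemma unif_subset_ge0 S : 0 <= unif_subset S.
Proof. by rewrite divr_ge0 ?ler0n. Qed.

Lemma unif_subset_sum1 : \sum_S unif_subset S = 1.
Proof.
rewrite /unif_subset -mulr_suml.
have -> : \sum_(S : {set 'I_n}) ((S \subset B)%:R : R) = #|powerset B|%:R.
  by rewrite -sum_indicator; apply: eq_bigr => S _; rewrite inE.
by rewrite card_powerset divff.
Qed.

Lemma unif_subset_parity (x : {set 'I_n}) :
  expect unif_subset (fun S => (chi S x)%:R) = (B :&: x != set0)%:R / 2.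
Proof.
have -> : expect unif_subset (fun S => (chi S x)%:R) =
          #|odd_subsets B x|%:R / (2 ^ #|B|)%:R.
  rewrite /expect /unif_subset -sum_indicator mulr_suml; apply: eq_bigr => S _.
  by rewrite !inE; case: (S \subset B); case: (chi S x);
    rewrite ?(mul1r, mul0r, mulr1, mulr0).
case: (eqVneq (B :&: x) set0) => Bx; first by rewrite odd_subsets_disjoint ?cards0 ?mul0r.
have odd_neq0 : (#|odd_subsets B x|%:R : R) != 0.
  by rewrite pnatr_eq0 -double_eq0 (odd_subsets_half Bx) expn_eq0.
by rewrite -(odd_subsets_half Bx) -muln2 natrM mul1r invfM mulrA divff ?mul1r.
Qed.

End UniformSubset.

Arguments unif_subset {R n} B S.

Lemma prod_supported_pair (R : comPzRingType) (I : finType) (i j : I) (G : I -> R) :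
  (forall l, l != i -> l != j -> G l = 1) ->
  \prod_l G l = if i == j then G i else G i * G j.
Proof.
case: (eqVneq i j) => [<-|ij] G1; rewrite (bigD1 i) //=.
  by rewrite big1 ?mulr1 // => l li; exact: G1.
rewrite (bigD1 j) /=; last by rewrite eq_sym.
by rewrite big1 ?mulr1 // => l /andP [li lj]; exact: G1.
Qed.

Section PowerDistribution.
Variables (R : comPzRingType) (T : finType) (k : nat) (P : T -> R).

Definition power_dist (t : {ffun 'I_k -> T}) : R := \prod_i P (t i).

Lemma expect_power_prod (H : 'I_k -> T -> R) :
  expect power_dist (fun t => \prod_i H i (t i)) = \prod_i expect P (H i).
Proof. by rewrite /expect bigA_distr_bigA; apply: eq_bigr => t _; rewrite -big_split. Qed.

Hypothesis P_sum1 : \sum_S P S = 1.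

Lemma power_dist_sum1 : \sum_t power_dist t = 1.
Proof. by rewrite /power_dist -(bigA_distr_bigA (fun _ S => P S)) big1. Qed.

Lemma expect_power_pair (d : T -> R) (i j : 'I_k) :
  expect power_dist (fun t => d (t i) * d (t j)) =
  if i == j then expect P (fun S => d S ^+ 2) else expect P d * expect P d.
Proof.
pose H (l : 'I_k) S := (if l == i then d S else 1) * (if l == j then d S else 1).
have H1 l : l != i -> l != j -> H l = fun=> 1.
  by move=> /negbTE li /negbTE lj; rewrite /H li lj mulr1.
transitivity (expect power_dist (fun t => \prod_l H l (t l))).
  apply: eq_bigr => t _; congr (_ * _); rewrite (@prod_supported_pair _ _ i j); last first.
    by move=> l li lj; rewrite H1.
  rewrite /H !eqxx; case: (eqVneq i j) => [<-|ij]; rewrite ?eqxx //.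
  by rewrite mulr1 mul1r.
rewrite expect_power_prod (@prod_supported_pair _ _ i j); last first.
  by move=> l li lj; rewrite H1 // /expect; under eq_bigr do rewrite mulr1.
rewrite /H !eqxx; case: (eqVneq i j) => [_|_].
  by apply: eq_bigr => S _; rewrite expr2.
by congr (_ * _); apply: eq_bigr => S _; rewrite ?mulr1 ?mul1r.
Qed.

End PowerDistribution.

Arguments power_dist {R T} k P t.

Lemma expect_sum (R : comPzRingType) (T I : finType) (P : T -> R) (h : I -> T -> R) :
  expect P (fun t => \sum_i h i t) = \sum_i expect P (h i).
Proof. by rewrite /expect exchange_big; apply: eq_bigr => t _; rewrite mulr_sumr. Qed.

Lemma expect_scale (R : comPzRingType) (T : finType) (P : T -> R) (c : R) (h : T -> R) :
  expect P (fun t => c * h t) = c * expect P h.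
Proof. by rewrite /expect mulr_sumr; apply: eq_bigr => t _; rewrite mulrCA. Qed.

Lemma expect_mean_sq (R : numFieldType) (T : finType) (k : nat) (P : T -> R) (d : T -> R) :
  \sum_S P S = 1 -> (0 < k)%N -> expect P d = 0 ->
  expect (power_dist k P) (fun t => ((\sum_i d (t i)) / k%:R) ^+ 2) =
  expect P (fun S => d S ^+ 2) / k%:R.
Proof.
move=> P_sum1 k_gt0 d_centred; have k_neq0 : (k%:R : R) != 0 by rewrite pnatr_eq0 -lt0n.
have sq_mean (t : {ffun 'I_k -> T}) : ((\sum_i d (t i)) / k%:R) ^+ 2 =
    (k%:R ^+ 2)^-1 * \sum_i \sum_j d (t i) * d (t j).
  by rewrite expr_div_n expr2 big_distrlr mulrC.
transitivity (expect (power_dist k P)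
  (fun t => (k%:R ^+ 2)^-1 * \sum_i \sum_j d (t i) * d (t j))).
  by apply: eq_bigr => t _; rewrite sq_mean.
rewrite expect_scale expect_sum.
under eq_bigr => i _ do rewrite expect_sum.
under eq_bigr => i _ do under eq_bigr => j _ do rewrite expect_power_pair // d_centred mulr0.
under eq_bigr => i _ do rewrite -big_mkcond (big_pred1 i) //.
by rewrite sumr_const card_ord -(mulr_natr (expect _ _)) expr2 invfM mulrC mulrA mulfK.
Qed.

Lemma two_point_variance (R : comPzRingType) (T : finType) (P : T -> R)
    (b : T -> bool) (c m : R) :
  \sum_S P S = 1 -> expect P (fun S => c * (b S)%:R) = m ->
  expect P (fun S => (c * (b S)%:R - m) ^+ 2) = c * m - m ^+ 2.
Proof.
rewrite /expect => P_sum1 mean_m.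
transitivity (\sum_S ((c - 2%:R * m) * (P S * (c * (b S)%:R)) + m ^+ 2 * P S)).
  by apply: eq_bigr => S _; case: (b S); rewrite ?mulr1n ?mulr0n; ring.
by rewrite big_split /= -!mulr_sumr mean_m P_sum1; ring.
Qed.

Lemma sketch_of_parity_estimator (R : realFieldType) (n : nat) (f : {set 'I_n} -> R)
    (P : {set 'I_n} -> R) (c : R) (k : nat) :
  (0 < k)%N -> (forall S, 0 <= P S) -> \sum_S P S = 1 ->
  (forall x, 0 <= f x <= 1) -> 0 <= c ->
  (forall x, expect P (fun S => c * (chi S x)%:R) = f x) ->
  sketch_approx f (c / k%:R) k.
Proof.
move=> k_gt0 P_ge0 P_sum1 f01 c_ge0 unbiased.
have k_gt0R : 0 < k%:R :> R by rewrite ltr0n.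
exists (power_dist k P), (fun b : {ffun 'I_k -> bool} => (\sum_i c * (b i)%:R) / k%:R).
split.
  by move=> t; apply: prodr_ge0 => i _.
split; first exact: power_dist_sum1.
move=> x; pose d S := c * (chi S x)%:R - f x.
have d_centred : expect P d = 0.
  rewrite /expect; under eq_bigr => S _ do rewrite /d mulrBr.
  by rewrite sumrB -/(expect _ _) unbiased -mulr_suml P_sum1 mul1r subrr.
have error (t : {ffun 'I_k -> {set 'I_n}}) :
    (\sum_i c * ([ffun i => chi (t i) x] i)%:R) / k%:R - f x = (\sum_i d (t i)) / k%:R.
  rewrite /d sumrB sumr_const card_ord mulrBl -[f x *+ k]mulr_natr mulfK ?gt_eqF //.
  by congr (_ / _ - _); apply: eq_bigr => i _; rewrite ffunE.
rewrite (_ : \sum_t _ = expect (power_dist k P) (fun t => ((\sum_i d (t i)) / k%:R) ^+ 2));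
  last by apply: eq_bigr => t _; rewrite error.
rewrite expect_mean_sq // (two_point_variance P_sum1 (unbiased x)).
rewrite ler_pM2r ?invr_gt0 //; have := f01 x; case/andP => f_ge0 f_le1; nra.
Qed.

(* A coverage function is a nonnegative combination of the "hitting"
   indicators S |-> [B u meets S]; elements u covered by no set may be given
   weight 0, so that the total weight equals f [set: 'I_n]. *)
Lemma coverage_hitting (R : numDomainType) (n : nat) (f : {set 'I_n} -> R) :
  coverage f ->
  exists m (B : 'I_m -> {set 'I_n}) (w : 'I_m -> R),
    [/\ forall u, 0 <= w u,
        forall S, f S = \sum_u w u * (B u :&: S != set0)%:R
      & f [set: 'I_n] = \sum_u w u].
Proof.
case=> m [A [w [w_ge0 f_def]]].
pose B u := [set j | u \in A j].
have covered (S : {set 'I_n}) u : (u \in \bigcup_(j in S) A j) = (B u :&: S != set0).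
  apply/bigcupP/set0Pn => [[j jS uA]|[j]]; first by exists j; rewrite !inE uA jS.
  by rewrite !inE => /andP [uA jS]; exists j.
have f_hit (S : {set 'I_n}) : f S = \sum_u w u * (B u :&: S != set0)%:R.
  rewrite f_def big_mkcond; apply: eq_bigr => u _; rewrite covered.
  by case: (_ != _); rewrite ?mulr1 ?mulr0.
exists m, B, (fun u => w u * (B u != set0)%:R); split.
- by move=> u; rewrite mulr_ge0 ?ler0n.
- move=> S; rewrite f_hit; apply: eq_bigr => u _.
  case: (eqVneq (B u) set0) => [->|_]; last by rewrite mulr1.
  by rewrite set0I eqxx !mulr0.
- by rewrite f_hit; apply: eq_bigr => u _; rewrite setIT.
Qed.

(* The key construction: pick u with probability w u / f [set: 'I_n] and then
   a uniform subset S of B u.  A set x meets B u iff chi_S(x) = 1 with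
   probability 1/2, so 2 f([n]) chi_S(x) is an unbiased estimator of f(x). *)
Lemma coverage_estimator (R : realFieldType) (n : nat) (f : {set 'I_n} -> R) :
  coverage f -> (forall x, 0 <= f x <= 1) ->
  exists (P : {set 'I_n} -> R) (c : R),
    [/\ forall S, 0 <= P S, \sum_S P S = 1, 0 <= c <= 2
      & forall x, expect P (fun S => c * (chi S x)%:R) = f x].
Proof.
move=> /coverage_hitting [m [B [w [w_ge0 f_hit f_total]]]] f01.
have /andP [W_ge0 W_le1] := f01 [set: 'I_n]; set W := f [set: 'I_n] in W_ge0 W_le1 f_total.
case: (eqVneq W 0) => [W0|W_neq0].
  have f0 x : f x = 0.
    apply/eqP; rewrite eq_le; have /andP [-> _] := f01 x; rewrite andbT -W0 f_total f_hit.
    by apply: ler_sum => u _; rewrite ler_piMr ?lern1 ?leq_b1.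
  exists (unif_subset (set0 : {set 'I_n})), 0; split; rewrite ?lexx ?ler0n //.
  - exact: unif_subset_ge0.
  - exact: unif_subset_sum1.
  - by move=> x; rewrite f0 /expect big1 // => S _; rewrite mul0r mulr0.
pose q u := w u / W.
exists (fun S => \sum_u q u * unif_subset (B u) S), (2%:R * W); split.
- move=> S; apply: sumr_ge0 => u _.
  by rewrite mulr_ge0 ?unif_subset_ge0 ?divr_ge0.
- have := expect_mixture q (fun u => unif_subset (B u)) (fun _ => 1).
  rewrite /expect; under eq_bigr do rewrite mulr1; move=> ->.
  under eq_bigr => u _ do (under eq_bigr do rewrite mulr1; rewrite unif_subset_sum1 mulr1).
  by rewrite -mulr_suml -f_total divff.
- by rewrite mulr_ge0 ?ler0n //= -[leRHS]mulr1 ler_wpM2l ?ler0n.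
- move=> x; rewrite expect_scale expect_mixture f_hit mulr_sumr.
  apply: eq_bigr => u _; rewrite unif_subset_parity /q.
  by field; rewrite W_neq0.
Qed.

Lemma chi_set1 (n : nat) (i : 'I_n) (x : {set 'I_n}) : chi [set i] x = (i \in x).
Proof.
rewrite /chi; case: (boolP (i \in x)) => ix.
  by rewrite (setIidPl _) ?sub1set // cards1.
rewrite (_ : _ :&: _ = set0) ?cards0 //.
by apply/setP => j; rewrite !inE; case: eqP => // ->; apply: negbTE.
Qed.

(* Reading all n coordinates, chi_{i}(x) = x_i, computes f exactly. *)
Lemma coordinate_sketch (R : numDomainType) (n : nat) (f : {set 'I_n} -> R) (eps : R) :
  0 <= eps -> sketch_approx f eps n.
Proof.
move=> eps_ge0; pose t0 : {ffun 'I_n -> {set 'I_n}} := [ffun i => [set i]].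
exists (fun t => (t == t0)%:R), (fun b => f [set i | b i]); split; first by move=> t.
split; first by rewrite (bigD1 t0) //= eqxx big1 ?addr0 // => t /negbTE ->.
move=> x; rewrite (bigD1 t0) //= eqxx big1 => [|t /negbTE ->]; last by rewrite mul0r.
have -> : [set i | [ffun i => chi (t0 i) x] i] = x.
  by apply/setP => i; rewrite inE !ffunE chi_set1.
by rewrite subrr expr2 !mulr0 addr0.
Qed.

Lemma sketch_approx_mono (R : numDomainType) (n : nat) (f : {set 'I_n} -> R)
    (eps eps' : R) (k : nat) :
  eps <= eps' -> sketch_approx f eps k -> sketch_approx f eps' k.
Proof.
move=> le_eps [mu [g [mu_ge0 [mu_sum1 err]]]]; exists mu, g; split=> //; split=> // x.
exact: le_trans (err x) le_eps.
Qed.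

(* Choice of the sketch size: R need not be archimedean, but a natural number N
   above 3/eps bounds the least k with 2/k <= eps, and that k is at most 3/eps. *)
Lemma sketch_size (R : realFieldType) (eps : R) (N : nat) :
  0 < eps <= 1 -> 3%:R / eps < N%:R ->
  exists k : nat, [/\ (0 < k)%N, k%:R <= 3%:R / eps & 2%:R / k%:R <= eps].
Proof.
case/andP=> eps_gt0 eps_le1 N_large.
have N_ok : 2%:R <= N%:R * eps.
  by rewrite -ler_pdivrMr // (le_trans _ (ltW N_large)) // ler_pM2r ?invr_gt0 ?ler_nat.
have [k k_ok k_min] := ex_minnP (ex_intro (fun k : nat => 2%:R <= k%:R * eps :> R) N N_ok).
have k_gt0 : (0 < k)%N.
  by rewrite lt0n; apply: contraTneq k_ok => ->; rewrite mul0r -ltNge ltr0n.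
have pred_small : (k.-1)%:R * eps < 2%:R :> R.
  by rewrite ltNge; apply/negP => /k_min; rewrite -{1}(prednK k_gt0) ltnn.
have k_pred : (k%:R : R) = (k.-1)%:R + 1 by rewrite natr1 prednK.
have k_gt0R : 0 < k%:R :> R by rewrite ltr0n.
exists k; split=> //; last by rewrite ler_pdivrMr // mulrC.
by rewrite ler_pdivlMr // k_pred mulrDl mul1r -natr1; lra.
Qed.

Theorem mainTheorem15 :
  exists C : nat,
    forall (R : rcfType) (n : nat) (f : {set 'I_n} -> R),
      coverage f ->
      (forall x, 0 <= f x <= 1) ->
      forall eps : R, 0 < eps <= 1 ->
        Rlin_le f eps (C%:R / eps).
Proof.
exists 3%N => R n f f_cov f01 eps eps01; have /andP [eps_gt0 _] := eps01.
case: (lerP (n%:R) (3%:R / eps)) => [n_small|n_large].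
  by exists n; split=> //; apply: coordinate_sketch; apply: ltW.
have [k [k_gt0 k_le k_err]] := sketch_size eps01 n_large.
have [P [c [P_ge0 P_sum1 /andP [c_ge0 c_le2] unbiased]]] := coverage_estimator f_cov f01.
exists k; split=> //.
apply: sketch_approx_mono (sketch_of_parity_estimator k_gt0 P_ge0 P_sum1 f01 c_ge0 unbiased).
by apply: le_trans k_err; rewrite ler_pM2r ?invr_gt0 ?ltr0n.
Qed.
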